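(* Let $x \in \{0,1\}^{N}$ and $q \in Q$. Then demand $q$ is served under $x$ (i.e., there exists $r \in R_q$ such that $\sum_{j \in S} x_j \ge 1$ for all $S \in \mathcal{D}_{q,r}$) if and only if $\sum_{j \in S} x_j \ge 1$ for all $S \in \mathcal{C}_q$.
   Context: Let $N$ be a finite set (of nodes) and $Q$ a finite set (of demands). For each $q \in Q$ let $R_q$ be a finite nonempty set (of routes), and for each $r \in R_q$ let $\mathcal{D}_{q,r} \subseteq 2^{N}$ be a family of subsets of $N$. Route $r$ is called traversable under $x \in \{0,1\}^N$ if $\sum_{j\in S} x_j \ge 1$ for every $S \in \mathcal{D}_{q,r}$, and demand $q$ is served under $x$ if some $r \in R_q$ is traversable under $x$. Define the aggregated family $\mathcal{C}_q = \{ \bigcup_{r \in R_q} S_r : S_r \in \mathcal{D}_{q,r} \text{ for each } r \in R_q\}$, i.e. each member of $\mathcal{C}_q$ is the union of one chosen set $S_r\in\mathcal{D}_{q,r}$ for every $r\in R_q$. *)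

From mathcomp Require Import all_boot.
Set Implicit Arguments. Unset Strict Implicit. Unset Printing Implicit Defensive.

(* x : N -> bool encodes x in {0,1}^N; x_j is (x j : nat). *)
Definition covers (N : finType) (x : N -> bool) (S : {set N}) : Prop :=
  (1 <= \sum_(j in S) (x j : nat))%N.

Definition traversable (N Q : finType) (R : Q -> finType)
  (D : forall q : Q, R q -> {set {set N}}) (x : N -> bool) (q : Q) (r : R q) : Prop :=
  forall S, S \in D q r -> covers x S.

Definition served (N Q : finType) (R : Q -> finType)
  (D : forall q : Q, R q -> {set {set N}}) (x : N -> bool) (q : Q) : Prop :=
  exists r : R q, @traversable N Q R D x q r.

Definition in_C (N Q : finType) (R : Q -> finType)
  (D : forall q : Q, R q -> {set {set N}}) (q : Q) (S : {set N}) : Prop :=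
  exists f : R q -> {set N},
    (forall r, f r \in D q r) /\ S = \bigcup_(r : R q) f r.

(* Hitting a union of chosen sets is the same as hitting one of them, so
   "every selection (S_r)_r has a hit union" fails exactly when each family
   D_{q,r} contains an unhit set: selecting those unhit sets gives an unhit
   member of C_q.  This is the distributive law turning the disjunction over
   routes of conjunctions of covering constraints into a single conjunction. *)
From mathcomp Require Import all_boot.

Set Implicit Arguments.
Unset Strict Implicit.
Unset Printing Implicit Defensive.

Section Covering.

Variables (N : finType) (x : N -> bool).

Lemma coversP (S : {set N}) : reflect (covers x S) [exists j in S, x j].
Proof.
suff <- : (0 < \sum_(j in S) x j) = [exists j in S, x j] by apply: idP.
rewrite lt0n sum_nat_eq0 negb_forall; apply: eq_existsb => j.
by rewrite negb_imply eqb0 negbK.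
Qed.

Lemma covers_bigcup (I : finType) (F : I -> {set N}) :
  covers x (\bigcup_i F i) <-> exists i, covers x (F i).
Proof.
split=> [/coversP/exists_inP[j /bigcupP[i _ jF] xj] | [i /coversP/exists_inP[j jF xj]]].
  by exists i; apply/coversP/exists_inP; exists j.
by apply/coversP/exists_inP; exists j => //; apply/bigcupP; exists i.
Qed.

Variables (I : finType) (F : I -> {set {set N}}).

Lemma covers_allP (i : I) :
  reflect (forall S, S \in F i -> covers x S)
          [forall S in F i, [exists j in S, x j]].
Proof. by apply: (iffP forall_inP) => cov S /cov /coversP. Qed.

Lemma uncovered_selection :
  ~ (exists i, forall S, S \in F i -> covers x S) ->
  exists2 f : I -> {set N}, forall i, f i \in F i & forall i, ~ covers x (f i).
Proof.
move=> none_covered.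
pose f i := odflt set0 [pick S in F i | ~~ [exists j in S, x j]].
have fP i : f i \in F i /\ ~ covers x (f i).
  rewrite /f; case: pickP => [S /andP[SF /coversP ncov] | all_covered] //.
  case: none_covered; exists i; apply/covers_allP/forall_inP => S SF.
  by apply: contraFT (all_covered S) => ncov; rewrite /= SF.
by exists f => i; case: (fP i).
Qed.

Lemma exists_covered_familyE :
  (exists i, forall S, S \in F i -> covers x S) <->
  (forall f : I -> {set N}, (forall i, f i \in F i) -> covers x (\bigcup_i f i)).
Proof.
split=> [[i cov] f fF | cov_all].
  by apply/covers_bigcup; exists i; apply: cov.
have [i /covers_allP | none_covered] :=
  pickP (fun i => [forall S in F i, [exists j in S, x j]]); first by exists i.
exfalso; have [|f fF ncov] := uncovered_selection.
  by case=> i /covers_allP; rewrite none_covered.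
by have [i] := (covers_bigcup _).1 (cov_all f fF); apply: ncov.
Qed.

End Covering.

Theorem lemma1 (N Q : finType) (R : Q -> finType)
  (D : forall q : Q, R q -> {set {set N}})
  (HR : forall q : Q, (0 < #|R q|)%N)
  (x : N -> bool) (q : Q) :
  served D x q <-> (forall S : {set N}, in_C D q S -> covers x S).
Proof.
apply: iff_trans (exists_covered_familyE x (D q)) _.
split=> [cov S [f [fD ->]] | cov f fD]; first exact: cov.
by apply: cov; exists f.
Qed.
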